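(* Let $(G,S)$ and $(H,S)$ be two compatible $d$-labeled boundaried graphs such that $\mathbf{Aux}(G,S)\oplus\mathbf{Aux}(H,S)$ has no cycles. If $F$ is an $S$-block of $(G,S)\oplus(H,S)$, then $\mathbf{Aux}(F\cap G,S\cap V(F))\oplus\mathbf{Aux}(F\cap H,S\cap V(F))$ has no cycles.
   Context: A block of a graph is a maximal connected subgraph without a cut vertex. A block $d$-labeling of a graph whose blocks have at most $d$ vertices is a map $V(G)\to[d]$ injective on each block; a $d$-labeled boundaried graph is a pair $(G,S)$ with $S\subseteq V(G)$ and $G$ carrying such a labeling. $(G,S)$ and $(H,S)$ are compatible if $V(G-S)\cap V(H-S)=\emptyset$, $G[S]=H[S]$, and labels agree on $S$. The sum $(G,S)\oplus(H,S)$ is the graph obtained from the disjoint union of $G$ and $H$ by identifying corresponding vertices of $S$ and removing duplicate edges inside $S$. An $S$-block of a graph containing $S$ is a block of it containing an edge of $G[S]$. For graphs $G_1,G_2$, $G_1\cap G_2$ is the graph with vertex set $V(G_1)\cap V(G_2)$ and edge set $E(G_1)\cap E(G_2)$. For a boundaried graph $(G,S)$, $\mathbf{Aux}(G,S)$ is the bipartite graph whose vertices are the connected components of $G$ and the connected components of $G[S]$, a component $C_1$ of $G$ adjacent to a component $C_2$ of $G[S]$ iff $C_2\subseteq C_1$; for two boundaried graphs with the same boundary graph, $\mathbf{Aux}(G,S)\oplus\mathbf{Aux}(H,S)$ is the disjoint union of $\mathbf{Aux}(G,S)$ and $\mathbf{Aux}(H,S)$ with the vertices corresponding to the same component of the boundary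 graph identified. *)

From mathcomp Require Import all_boot.
Set Implicit Arguments. Unset Strict Implicit. Unset Printing Implicit Defensive.

Section Graphs.
Variable T : finType.

Record graph := Graph { gV : {set T}; gE : {set {set T}} }.

Definition wf_graph (G : graph) :=
  forall e, e \in gE G -> #|e| = 2 /\ e \subset gV G.

Definition adjin (G : graph) : rel T :=
  fun x y => [&& x != y, [set x; y] \in gE G, x \in gV G & y \in gV G].

Definition induced (G : graph) (S : {set T}) : graph :=
  Graph S [set e in gE G | e \subset S].

Definition gcap (G1 G2 : graph) : graph :=
  Graph (gV G1 :&: gV G2) (gE G1 :&: gE G2).

(* (G,S) ⊕ (H,S) for compatible boundaried graphs living on the common
   universe T (vertices of S are shared, the others are disjoint), so that
   identifying S and removing duplicate edges is just the union. *)
Definition gsum (G H : graph) : graph :=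
  Graph (gV G :|: gV H) (gE G :|: gE H).

Definition subgraph (F G : graph) :=
  wf_graph F /\ gV F \subset gV G /\ gE F \subset gE G.

Definition gdel (G : graph) (v : T) : graph :=
  Graph (gV G :\ v) [set e in gE G | v \notin e].

(* connected (the empty graph is vacuously connected here) *)
Definition gconnected (G : graph) :=
  forall x y, x \in gV G -> y \in gV G -> connect (adjin G) x y.

Definition conn_nocut (F : graph) :=
  [/\ wf_graph F, gV F != set0, gconnected F &
      forall v, v \in gV F -> gconnected (gdel F v)].

Definition is_block (F G : graph) :=
  [/\ subgraph F G, conn_nocut F &
      forall F', subgraph F' G -> conn_nocut F' ->
        gV F \subset gV F' -> gE F \subset gE F' -> F' = F].

Definition is_S_block (S : {set T}) (F G : graph) :=
  is_block F G /\ exists2 e, e \in gE (induced G S) & e \in gE F.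

Definition block_labeling (d : nat) (G : graph) (l : T -> 'I_d) :=
  forall B, is_block B G -> {in gV B &, injective l}.

Definition comps (G : graph) : {set {set T}} :=
  [set [set y | connect (adjin G) x y] | x in gV G].

(* Aux(G,S) ⊕ Aux(H,S): vertices are (C, Some true) for components C of G,
   (C, Some false) for components of H and (D, None) for components of the
   common boundary graph G[S] = H[S]. *)
Definition auxV (G H : graph) (S : {set T}) : {set ({set T} * option bool)} :=
  [set (C, Some true) | C in comps G] :|: [set (C, Some false) | C in comps H]
  :|: [set (D, None) | D in comps (induced G S)].

Definition aux_adj (u v : {set T} * option bool) : bool :=
  match u.2, v.2 with
  | Some _, None => v.1 \subset u.1
  | None, Some _ => u.1 \subset v.1
  | _, _ => false
  end.

Definition acyclic (U : finType) (V : {set U}) (r : rel U) :=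
  ~ exists s : seq U, [/\ uniq s, 2 < size s, {subset s <= V} & cycle r s].

Definition aux_sum_acyclic (G H : graph) (S : {set T}) :=
  acyclic (auxV G H S) aux_adj.

End Graphs.

(** Send each component of F ∩ G, of F ∩ H and of their common boundary graph
    to the component of G, of H and of G[S] containing it.  This is a
    homomorphism of the auxiliary graphs, and it is injective because a block
    F of G ⊕ H admits no ears: a path of G ⊕ H leaving F and coming back to
    another vertex of F would, together with F, span a larger subgraph without
    a cut vertex.  Hence two vertices of F joined in G (in H, in G[S]) are
    already joined in F ∩ G (in F ∩ H, in F ∩ G[S]).  An injective
    homomorphism maps cycles to cycles, so acyclicity pulls back. *)

From mathcomp Require Import all_boot.
Set Implicit Arguments. Unset Strict Implicit. Unset Printing Implicit Defensive.

Section Adjacency.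
Variable T : finType.
Implicit Types (G K W : graph T) (X Y : {set T}).

Lemma adjin_sym G : symmetric (adjin G).
Proof.
move=> x y; rewrite /adjin eq_sym setUC.
by case: (x \in gV G); case: (y \in gV G); rewrite ?andbT ?andbF.
Qed.

Lemma connect_adjinC G : connect_sym (adjin G).
Proof. exact/sym_connect_sym/adjin_sym. Qed.

Lemma adjin_memV G x y : adjin G x y -> x \in gV G /\ y \in gV G.
Proof. by case/and4P. Qed.

Lemma path_adjin_memV G x p : path (adjin G) x p -> {subset p <= gV G}.
Proof.
elim: p x => //= y p IH x /andP[/adjin_memV[_ yG] /IH pG] z.
by rewrite inE => /orP[/eqP->|/pG].
Qed.

Lemma sub_adjin K G : gE K \subset gE G -> gV K \subset gV G ->
  subrel (adjin K) (adjin G).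
Proof.
move=> sE sV x y /and4P[xy e xK yK].
by rewrite /adjin xy (subsetP sE _ e) (subsetP sV _ xK) (subsetP sV _ yK).
Qed.

Lemma adjin_induced W Y x y :
  x \in Y -> y \in Y -> adjin W x y -> adjin (induced W Y) x y.
Proof.
move=> xY yY /and4P[xy e _ _].
by rewrite /adjin /= xy xY yY inE e subUset !sub1set xY yY.
Qed.

Lemma induced_path_connect W Y x p : path (adjin W) x p ->
  {subset x :: p <= Y} -> connect (adjin (induced W Y)) x (last x p).
Proof.
move=> pW pY; apply/connectP; exists p => //.
by apply: (sub_in_path (P := mem Y)) pW; [exact: adjin_induced | exact/allP].
Qed.

Lemma gdel_induced W X v : gdel (induced W X) v = induced W (X :\ v).
Proof. by congr Graph; apply/setP => e; rewrite !inE subsetD1 andbA. Qed.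

Lemma wf_induced W X : wf_graph W -> wf_graph (induced W X).
Proof. by move=> wfW e; rewrite inE => /andP[/wfW[]]. Qed.

Lemma subgraph_induced W X : wf_graph W -> X \subset gV W ->
  subgraph (induced W X) W.
Proof.
move=> wfW sXW; split; first exact: wf_induced.
by split=> //; apply/subsetP => e; rewrite inE => /andP[].
Qed.

Lemma wf_gsum G H : wf_graph G -> wf_graph H -> wf_graph (gsum G H).
Proof.
move=> wfG wfH e; rewrite inE => /orP[/wfG|/wfH] [c s]; split=> //.
  exact: subset_trans s (subsetUl _ _).
exact: subset_trans s (subsetUr _ _).
Qed.

End Adjacency.

Section Blocks.
Variable T : finType.
Implicit Types (F K W : graph T) (X Y Z : {set T}).

Definition attached W F X := forall Z, #|Z| <= 1 ->
  {in X :\: Z, forall x, exists2 a, a \in gV F :\: Z &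
     connect (adjin (induced W (X :\: Z))) x a}.

Lemma attached_connected W F X Z : #|Z| <= 1 -> attached W F X ->
  {in gV F :\: Z &, forall a b, connect (adjin (induced W (X :\: Z))) a b} ->
  gconnected (induced W (X :\: Z)).
Proof.
move=> Z1 hX hF x y xX yX.
have [a aF xa] := hX Z Z1 x xX; have [b bF yb] := hX Z Z1 y yX.
apply: connect_trans xa (connect_trans (hF a b aF bF) _).
by rewrite connect_adjinC.
Qed.

Lemma conn_nocut_attached W F X : wf_graph W -> subgraph F W -> conn_nocut F ->
  gV F \subset X -> attached W F X -> conn_nocut (induced W X).
Proof.
move=> wfW [_ [sVF sEF]] [_ nF cF cdF] sFX hX.
have connF Y K a b : gE K \subset gE F -> gV K \subset Y -> gV K \subset gV F ->
    connect (adjin K) a b -> connect (adjin (induced W Y)) a b.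
  move=> sEK sKY sKF; apply: connect_sub => x y xy; apply: connect1.
  have [xK yK] := adjin_memV xy.
  apply: adjin_induced (subsetP sKY _ xK) (subsetP sKY _ yK) _.
  exact: sub_adjin (subset_trans sEK sEF) (subset_trans sKF sVF) _ _ xy.
split; first exact: wf_induced.
- by apply: contraNneq nF => /= X0; rewrite -subset0 -X0.
- rewrite -[X]setD0; apply: (attached_connected _ hX); rewrite ?cards0 // !setD0.
  by move=> a b aF bF; apply: connF (subxx _) sFX (subxx _) (cF a b aF bF).
move=> v _; rewrite gdel_induced; apply: (attached_connected _ hX); rewrite ?cards1 //.
move=> a b aF bF; have [vF|vF] := boolP (v \in gV F).
  apply: connF (cdF v vF a b aF bF); last exact: subsetDl.
    by apply/subsetP => e; rewrite inE => /andP[].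
  exact: setSD.
move: aF bF; rewrite !inE => /andP[_ aF] /andP[_ bF].
apply: connF (cF a b aF bF) => //; apply/subsetP => z zF.
by rewrite !inE (subsetP sFX _ zF) andbT; apply: contraNneq vF => <-.
Qed.

Lemma block_attached W F X : wf_graph W -> is_block F W ->
  gV F \subset X -> X \subset gV W -> attached W F X -> induced W X = F.
Proof.
move=> wfW [sF cF maxF] sFX sXW hX.
apply: maxF => //; [exact: subgraph_induced | exact: conn_nocut_attached sF cF sFX hX |].
case: sF => wfF [_ sEF]; apply/subsetP => e eF.
by rewrite inE (subsetP sEF _ eF) (subset_trans _ sFX) //; case: (wfF e eF).
Qed.

Lemma block_induced W F : wf_graph W -> is_block F W -> induced W (gV F) = F.
Proof.
move=> wfW bF; have [[_ [sVF _]] _ _] := bF.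
apply: block_attached => // Z _ x xF; exists x => //; exact: connect0.
Qed.

Lemma ear_attached W F u w I : u \in gV F -> w \in gV F ->
  path (adjin W) u (rcons I w) -> uniq (u :: rcons I w) ->
  attached W F (gV F :|: [set x in I]).
Proof.
move=> uF wF pW uq Z Z1 x; rewrite in_setD !inE => /andP[xZ /orP[xF|xI]].
  by exists x; [rewrite in_setD xZ xF | exact: connect0].
case/splitPr: xI pW uq => I1 I2; rewrite rcons_cat rcons_cons cat_path -cat_cons.
rewrite cat_uniq => /andP[pu /andP[ux px]] /and3P[_ avoid _].
have inXZ y : y \in u :: I1 ++ x :: rcons I2 w -> y \notin Z ->
    y \in (gV F :|: [set v in I1 ++ x :: I2]) :\: Z.
  rewrite in_setD !(inE, mem_cat, mem_rcons) => + ->.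
  by case/or4P=> [/eqP->|->|/eqP->|/orP[/eqP->|->]]; rewrite ?uF ?wF ?eqxx ?orbT.
have [/hasP[z zs zZ]|/hasPn sZ] := boolP (has (mem Z) (x :: rcons I2 w)).
  have uI1Z y : y \in u :: I1 -> y \notin Z.
    move=> yu; apply: contraNN avoid => yZ; apply/hasP; exists z => //.
    by have /card_le1_eqP/(_ y z yZ zZ) -> := Z1.
  exists u; first by rewrite in_setD uF uI1Z ?mem_head.
  rewrite connect_adjinC -[x in connect _ _ x](last_rcons u I1).
  apply: induced_path_connect; first by rewrite rcons_path pu ux.
  move=> y; rewrite -rcons_cons mem_rcons inE => /orP[/eqP->|yu].
    by apply: (inXZ _ _ xZ); rewrite !(inE, mem_cat) eqxx !orbT.
  by apply: (inXZ _ _ (uI1Z y yu)); rewrite -cat_cons mem_cat yu.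
exists w; first by rewrite in_setD wF sZ // inE mem_rcons inE eqxx !orbT.
rewrite -[w in connect _ _ w](last_rcons x I2); apply: induced_path_connect => //.
by move=> y ys; apply: (inXZ _ _ (sZ y ys)); rewrite !inE mem_cat ys !orbT.
Qed.

Lemma block_ear_nil W F u w I : wf_graph W -> is_block F W ->
  u \in gV F -> w \in gV F -> path (adjin W) u (rcons I w) ->
  uniq (u :: rcons I w) -> ~~ has (mem (gV F)) I -> I = [::].
Proof.
move=> wfW bF uF wF pW uq IF; have [[_ [sVF _]] _ _] := bF.
have sXW : gV F :|: [set x in I] \subset gV W.
  rewrite subUset sVF; apply/subsetP => x; rewrite inE => xI.
  by apply: (path_adjin_memV pW); rewrite mem_rcons inE xI orbT.
have := block_attached wfW bF (subsetUl _ _) sXW (ear_attached uF wF pW uq).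
case: I IF {pW uq sXW} => // i I /= /norP[iF _] /(congr1 (@gV T)) /setP/(_ i).
by rewrite !inE eqxx orbT (negbTE iF).
Qed.

Lemma block_adjin_gcap W F K : wf_graph W -> is_block F W ->
  gE K \subset gE W -> {in gV F &, subrel (adjin K) (adjin (gcap F K))}.
Proof.
move=> wfW bF sEK u w uF wF /and4P[uw e uK wK].
have : [set u; w] \in gE (induced W (gV F)).
  by rewrite inE (subsetP sEK _ e) subUset !sub1set uF wF.
by rewrite block_induced // => eF; rewrite /adjin /= uw !inE uF wF uK wK e eF.
Qed.

Lemma block_path_gcap W F K u p : wf_graph W -> is_block F W ->
  gE K \subset gE W -> gV K \subset gV W -> u \in gV F ->
  path (adjin K) u p -> uniq (u :: p) -> last u p \in gV F ->
  connect (adjin (gcap F K)) u (last u p).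
Proof.
move=> wfW bF sEK sVK.
elim: {p}_.+1 {-2}p (ltnSn (size p)) u => // n IH p lt_p u uF pK uq lF.
case: p => [|q p] in lt_p pK uq lF *; first exact: connect0.
have hasF : has (mem (gV F)) (q :: p).
  by apply/hasP; exists (last q p); rewrite ?mem_last.
case/split_find: hasF lt_p pK uq lF => w I p2 wF IF lt_p pK uq lF.
(* The walk returns to F either through a single edge or through an ear. *)
have eI : I = [::].
  apply: block_ear_nil wfW bF uF wF _ _ IF.
    by move: pK; rewrite cat_path => /andP[/(sub_path (sub_adjin sEK sVK))].
  by move: uq; rewrite -cat_cons cat_uniq => /andP[].
move: pK uq lF lt_p; rewrite eI /= => /andP[uw pK] /andP[_ uq] lF lt_p.
apply: connect_trans (connect1 (block_adjin_gcap wfW bF sEK uF wF uw)) _.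
exact: IH lt_p _ wF pK uq lF.
Qed.

Lemma block_connect_gcap W F K : wf_graph W -> is_block F W ->
  gE K \subset gE W -> gV K \subset gV W ->
  {in gV F &, forall u v, connect (adjin K) u v -> connect (adjin (gcap F K)) u v}.
Proof.
move=> wfW bF sEK sVK u v uF vF /connectP[p pK ev]; move: vF; rewrite ev.
by case/shortenP: pK => p' pK' uq _; exact: block_path_gcap wfW bF sEK sVK uF pK' uq.
Qed.

End Blocks.

Lemma acyclic_inj_hom (U U' : finType) (V : {set U}) (V' : {set U'})
    (r : rel U) (r' : rel U') (f : U -> U') :
  {in V &, injective f} -> {in V, forall x, f x \in V'} ->
  {in V &, {homo f : x y / r x y >-> r' x y}} ->
  acyclic V' r' -> acyclic V r.
Proof.
move=> f_inj fV f_hom acyc' [s [us ss sV cs]]; apply: acyc'.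
exists (map f s); split; rewrite ?size_map //.
- by rewrite map_inj_in_uniq // => x y /sV xV /sV yV; apply: f_inj.
- by move=> _ /mapP[x /sV xV ->]; apply: fV.
- by apply: homo_cycle_in f_hom _ cs; apply/allP.
Qed.

Section Components.
Variable T : finType.
Implicit Types (G K F : graph T) (C : {set T}).

Definition component G x := [set y | connect (adjin G) x y].

Definition component_hull G C := [set y | [exists x in C, connect (adjin G) x y]].

Lemma component_hull_component G K r : subrel (adjin K) (adjin G) ->
  component_hull G (component K r) = component G r.
Proof.
move=> sKG; apply/setP => y; rewrite !inE; apply/existsP/idP => [[x]|ry].
  rewrite inE => /andP[rx]; apply: connect_trans.
  by apply: connect_sub rx => a b /sKG/connect1.
by exists r; rewrite inE connect0.
Qed.

Lemma component_eq G r r' : connect (adjin G) r r' -> component G r = component G r'.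
Proof.
move=> rr'; apply/setP => y; rewrite !inE; apply/idP/idP; last exact: connect_trans.
by apply: connect_trans; rewrite connect_adjinC.
Qed.

Definition aux_side G H S (b : option bool) :=
  match b with Some true => G | Some false => H | None => induced G S end.

Lemma in_auxV G H S u : (u \in auxV G H S) = (u.1 \in comps (aux_side G H S u.2)).
Proof.
have tagE (A : {set {set T}}) b t C :
    ((C, t) \in [set (D, b) | D in A]) = (t == b) && (C \in A).
  by apply/imsetP/andP => [[D DA [-> ->]]|[/eqP-> CA]]; last exists C.
by case: u => C [[]|]; rewrite /auxV !inE !tagE /= ?orbF.
Qed.

Lemma aux_side_gcap G H S F b : wf_graph F ->
  aux_side (gcap F G) (gcap F H) (S :&: gV F) b = gcap F (aux_side G H S b).
Proof.
move=> wfF; case: b => [[]|] //=; congr Graph; first exact: setIC.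
apply/setP => e; rewrite !inE subsetI; have [eF|] //= := boolP (e \in gE F).
by have [_ ->] := wfF e eF; rewrite andbT.
Qed.

Definition aux_lift G H S (u : {set T} * option bool) :=
  (component_hull (aux_side G H S u.2) u.1, u.2).

Section AuxLift.
Variables (G H F : graph T) (S : {set T}).
Hypotheses (wfG : wf_graph G) (wfH : wf_graph H).
Hypotheses (SG : S \subset gV G) (SH : S \subset gV H).
Hypotheses (eGH : induced G S = induced H S) (bF : is_block F (gsum G H)).

Local Notation K := (aux_side G H S).
Local Notation auxF := (auxV (gcap F G) (gcap F H) (S :&: gV F)).

Lemma aux_side_subgraph b :
  gE (K b) \subset gE (gsum G H) /\ gV (K b) \subset gV (gsum G H).
Proof.
case: b => [[]|] /=; split; rewrite ?subsetUl ?subsetUr //.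
  by apply: subset_trans (subsetUl _ _); apply/subsetP => e; rewrite inE => /andP[].
exact: subset_trans SG (subsetUl _ _).
Qed.

Lemma boundary_adjin_side b : subrel (adjin (induced G S)) (adjin (K (Some b))).
Proof.
by case: b; [|rewrite eGH]; apply: sub_adjin => //;
  apply/subsetP => e; rewrite inE => /andP[].
Qed.

Lemma aux_lift_spec C b : (C, b) \in auxF ->
  exists2 r, r \in gV F :&: gV (K b) &
    C = component (gcap F (K b)) r /\ aux_lift G H S (C, b) = (component (K b) r, b).
Proof.
have wfF : wf_graph F by case: bF => [[]].
rewrite in_auxV aux_side_gcap //= => /imsetP[r rFK eC]; exists r => //; split=> //.
by rewrite /aux_lift eC component_hull_component //; apply: sub_adjin; exact: subsetIr.
Qed.

Lemma aux_lift_auxV : {in auxF, forall u, aux_lift G H S u \in auxV G H S}.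
Proof.
move=> [C b] /aux_lift_spec[r /setIP[_ rK] [_ ->]].
by rewrite in_auxV; apply/imsetP; exists r.
Qed.

Lemma aux_lift_inj : {in auxF &, injective (aux_lift G H S)}.
Proof.
move=> [C b] [C' b'] /aux_lift_spec[r /setIP[rF _] [-> ->]].
move=> /aux_lift_spec[r' /setIP[rF' _] [-> ->]] [eK eb]; subst b'.
have rr' : connect (adjin (K b)) r r'.
  by move/setP/(_ r'): eK; rewrite !inE connect0 => ->.
have [sE sV] := aux_side_subgraph b.
by rewrite (component_eq (block_connect_gcap (wf_gsum wfG wfH) bF sE sV rF rF' rr')).
Qed.

Lemma aux_lift_sub C D b : (C, Some b) \in auxF -> (D, None) \in auxF ->
  D \subset C -> (aux_lift G H S (D, None)).1 \subset (aux_lift G H S (C, Some b)).1.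
Proof.
move=> /aux_lift_spec[r _ [-> ->]] /aux_lift_spec[r' _ [-> ->]] /subsetP/(_ r').
rewrite !inE connect0 => /(_ isT) rr'; apply/subsetP => y; rewrite !inE => r'y.
apply: connect_trans (connect_sub _ rr') (connect_sub _ r'y) => x z xz; apply: connect1.
  by apply: sub_adjin xz; exact: subsetIr.
exact: boundary_adjin_side.
Qed.

Lemma aux_lift_hom : {in auxF &, {homo aux_lift G H S : u v / aux_adj u v}}.
Proof. by move=> [C [b|]] [D [b'|]] //= uF vF; apply: aux_lift_sub. Qed.

End AuxLift.

End Components.

Theorem lemma3p6 (T : finType) (d : nat) (G H : graph T) (S : {set T})
    (lG lH : T -> 'I_d) :
  wf_graph G -> wf_graph H ->
  S \subset gV G -> S \subset gV H ->
  block_labeling G lG -> block_labeling H lH ->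
  (* compatibility *)
  [disjoint gV G :\: S & gV H :\: S] ->
  induced G S = induced H S ->
  {in S, lG =1 lH} ->
  aux_sum_acyclic G H S ->
  forall F : graph T, is_S_block S F (gsum G H) ->
  aux_sum_acyclic (gcap F G) (gcap F H) (S :&: gV F).
Proof.
move=> wfG wfH SG SH _ _ _ eGH _ acyc F [bF _].
apply: (acyclic_inj_hom (f := aux_lift G H S)) acyc.
- exact: aux_lift_inj.
- exact: aux_lift_auxV.
- exact: aux_lift_hom.
Qed.
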